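(* Let $M=(I,T)$ be a symbolic transition system with $T = A_1 \vee \dots \vee A_k$, and let $(V_L \cup V_A, E)$ be an inductive proof graph for $M$ that is valid. Suppose that $I \Rightarrow L$ holds for every $L \in V_L$. Then the conjunction $\bigwedge_{L \in V_L} L$ of all lemmas in $V_L$ is an inductive invariant of $M$, i.e. it satisfies $I \Rightarrow \bigwedge_{L\in V_L} L$ and $\left(\bigwedge_{L\in V_L} L\right) \wedge T \Rightarrow \left(\bigwedge_{L\in V_L} L\right)'$.
   Context: A symbolic transition system $M=(I,T)$ consists of a state predicate $I$ (initial states) over a finite set of state variables and a transition relation $T$, a predicate over current-state variables and primed next-state copies of them; for a state predicate $P$, $P'$ denotes $P$ with every state variable replaced by its primed version. The transition relation is a disjunction of actions, $T = A_1 \vee \dots \vee A_k$, each $A_i$ a predicate over current and next-state variables. A state predicate $Ind$ is an inductive invariant if $I \Rightarrow Ind$ and $Ind \wedge T \Rightarrow Ind'$ are valid. An inductive proof graph for $M$ is a directed graph $(V,E)$ with $V = V_L \cup V_A$, where $V_L$ (lemma nodes) is a set of state predicates over $M$, $V_A = V_L \times \{A_1,\dots,A_k\}$ (action nodes), and $E \subseteq V_L \times V_A$ (lemma support edges). For an action node $(L,A)$, its support set is $Supp_{(L,A)} = \{\ell \in V_L : (\ell,(L,A)) \in E\}$; the action node is locally valid if $\left(\bigwedge_{\ell \in Supp_{(L,A)}} \ell\right) \wedge L \wedge A \Rightarrow L'$ is valid. A lemma node $L$ is locally valid if all action nodes $(L,A_1),\dots,(L,A_k)$ are locally valid. The graph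 is valid if every lemma node in $V_L$ is locally valid. *)

From Stdlib Require Import List.
Import ListNotations.

(* A symbolic transition system over a state space [S]:
   state predicates are [S -> Prop]; a transition relation / action is
   [S -> S -> Prop] relating a current state [s] to a next state [s'].
   For a state predicate P, P' is (fun s' => P s') evaluated at the next state. *)

Definition state_pred (S : Type) := S -> Prop.
Definition action (S : Type) := S -> S -> Prop.

Definition trans_of {S : Type} (acts : list (action S)) : action S :=
  fun s s' => exists A, In A acts /\ A s s'.

Definition conj_preds {S : Type} (Ls : list (state_pred S)) : state_pred S :=
  fun s => forall L, In L Ls -> L s.

Definition inductive_invariant {S : Type} (I : state_pred S) (T : action S)
  (Ind : state_pred S) : Prop :=
  (forall s, I s -> Ind s) /\ (forall s s', Ind s -> T s s' -> Ind s').

(* Inductive proof graph: lemma nodes VL, actions acts, action nodes VL x acts,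
   support edges E ⊆ VL x (VL x acts), given as a relation E l (L, A). *)
Set Implicit Arguments.
Record proof_graph (S : Type) := {
  pg_VL : list (state_pred S);
  pg_E : state_pred S -> state_pred S * action S -> Prop
}.

Definition support {S : Type} (G : proof_graph S) (L : state_pred S) (A : action S)
  : state_pred S -> Prop :=
  fun l => In l (pg_VL G) /\ pg_E G l (L, A).

Definition graph_wf {S : Type} (acts : list (action S)) (G : proof_graph S) : Prop :=
  forall l L A, pg_E G l (L, A) -> In l (pg_VL G) /\ In L (pg_VL G) /\ In A acts.

Definition action_node_locally_valid {S : Type} (G : proof_graph S)
  (L : state_pred S) (A : action S) : Prop :=
  forall s s', (forall l, support G L A l -> l s) -> L s -> A s s' -> L s'.

Definition lemma_node_locally_valid {S : Type} (acts : list (action S))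
  (G : proof_graph S) (L : state_pred S) : Prop :=
  forall A, In A acts -> action_node_locally_valid G L A.

Definition graph_valid {S : Type} (acts : list (action S)) (G : proof_graph S) : Prop :=
  forall L, In L (pg_VL G) -> lemma_node_locally_valid acts G L.

(* Every support set lies inside V_L, so in a state satisfying the conjunction
   of all lemmas every support holds; local validity of the action node (L, A)
   then carries each lemma L across each action A. *)

From Stdlib Require Import List.

Set Implicit Arguments.

Section ConjunctionOfLemmas.

Variable S : Type.

Lemma conj_preds_init (I : state_pred S) (Ls : list (state_pred S)) :
  (forall L, In L Ls -> forall s, I s -> L s) ->
  forall s, I s -> conj_preds Ls s.
Proof.
  intros Hinit s Hs L HL.
  exact (Hinit L HL s Hs).
Qed.

Lemma conj_preds_support (G : proof_graph S) (L : state_pred S) (A : action S)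
  (s : S) :
  conj_preds (pg_VL G) s -> forall l, support G L A l -> l s.
Proof.
  intros Hconj l [Hl _].
  exact (Hconj l Hl).
Qed.

Lemma graph_valid_conj_preds_step (acts : list (action S)) (G : proof_graph S)
  (s s' : S) :
  graph_valid acts G ->
  conj_preds (pg_VL G) s -> trans_of acts s s' -> conj_preds (pg_VL G) s'.
Proof.
  intros Hvalid Hconj [A [HA Hstep]] L HL.
  apply (Hvalid L HL A HA s s').
  - exact (conj_preds_support Hconj).
  - exact (Hconj L HL).
  - exact Hstep.
Qed.

End ConjunctionOfLemmas.

Theorem lemma4p5 (S : Type) (I : state_pred S) (acts : list (action S))
  (G : proof_graph S) :
  graph_wf acts G ->
  graph_valid acts G ->
  (forall L, In L (pg_VL G) -> forall s, I s -> L s) ->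
  inductive_invariant I (trans_of acts) (conj_preds (pg_VL G)).
Proof.
  intros _ Hvalid Hinit. split.
  - apply conj_preds_init; exact Hinit.
  - intros s s'. apply graph_valid_conj_preds_step; exact Hvalid.
Qed.
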